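(* Let $\alpha,s,t\in\mathbb{C}$ with $w=\tfrac12(s+t)$ and $l+w\neq0$ for all $l\in\mathbb{Z}$. For all $u,v\in\mathbb{C}$ and all $a,b,c\in\mathbb{Z}$ with $|a-b|=|b-c|=1$, $$R^{(1,1)}(u-v)\,\psi^{(1)}(u)^a_b\otimes\psi^{(1)}(v)^b_c=\sum_{b'\in\mathbb{Z}}\psi^{(1)}(u)^{b'}_c\otimes\psi^{(1)}(v)^a_{b'}\,W^{(1,1)}\left(\begin{smallmatrix} a& b\\ b'& c\end{smallmatrix}\middle|u-v\right).$$
   Context: $\mathbb{C}^2$ has basis $e_1,e_2$ (vectors written as coordinate columns) and $\mathbb{C}^2\otimes\mathbb{C}^2$ has ordered basis $e_1\otimes e_1,e_1\otimes e_2,e_2\otimes e_1,e_2\otimes e_2$, in which $$R^{(1,1)}(u)=\begin{pmatrix}u+1&0&0&0\\0&u&1&0\\0&1&u&0\\ \alpha^2u(u+1)&0&0&u+1\end{pmatrix}$$ (the rational seven-vertex $R$-matrix). Intertwining vectors: $\psi^{(1)}(u)^l_{l+1}=\begin{pmatrix}1\\ \alpha(u-l-t)\end{pmatrix}$, $\psi^{(1)}(u)^l_{l-1}=\begin{pmatrix}1\\ \alpha(u+l+s)\end{pmatrix}$, $\psi^{(1)}(u)^a_b=0$ if $|a-b|\neq1$. The weights $W^{(1,1)}\left(\begin{smallmatrix} a& b\\ d& c\end{smallmatrix}\middle|u\right)$ are zero unless $|a-b|=|b-c|=|c-d|=|d-a|=1$, and for $l\in\mathbb{Z}$ (both sign choices):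 $W^{(1,1)}\left(\begin{smallmatrix} l\pm2& l\pm1\\ l\pm1& l\end{smallmatrix}\middle|u\right)=u+1$, $W^{(1,1)}\left(\begin{smallmatrix} l& l\pm1\\ l\pm1& l\end{smallmatrix}\middle|u\right)=\frac{\mp u+l+w}{l+w}$, $W^{(1,1)}\left(\begin{smallmatrix} l& l\pm1\\ l\mp1& l\end{smallmatrix}\middle|u\right)=\frac{u(l\pm1+w)}{l+w}$. *)

(* C is modelled as R[i] (real-closed's complex) for R : realType. *)
From mathcomp Require Import all_boot all_algebra.
From mathcomp Require Import reals complex.
Set Implicit Arguments. Unset Strict Implicit. Unset Printing Implicit Defensive.
Import GRing.Theory Num.Theory.
Local Open Scope ring_scope.

Section Defs.
Variable F : fieldType.

Definition vec2 (x1 x2 : F) : 'cV[F]_2 :=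
  \col_(i < 2) (if nat_of_ord i == 0%N then x1 else x2).

(* tensor product C^2 (x) C^2 = C^4 with ordered basis
   e1e1, e1e2, e2e1, e2e2: index i = 2 * i1 + i2 *)
Definition tens (x y : 'cV[F]_2) : 'cV[F]_4 :=
  \col_(i < 4) (x (inord (i %/ 2)) 0 * y (inord (i %% 2)) 0).

Definition Rmat (alpha u : F) : 'M[F]_4 :=
  \matrix_(i < 4, j < 4)
    match (nat_of_ord i, nat_of_ord j) with
    | (0, 0)%N => u + 1
    | (1, 1)%N => u
    | (1, 2)%N => 1
    | (2, 1)%N => 1
    | (2, 2)%N => u
    | (3, 0)%N => alpha ^+ 2 * u * (u + 1)
    | (3, 3)%N => u + 1
    | _ => 0
    end.

Definition psi (alpha s t u : F) (a b : int) : 'cV[F]_2 :=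
  if b == a + 1 then vec2 1 (alpha * (u - a%:~R - t))
  else if b == a - 1 then vec2 1 (alpha * (u + a%:~R + s))
  else 0.

Definition wpar (s t : F) : F := (s + t) / 2.

(* Boltzmann weight W^{(1,1)} ( a b ; d c | u ) *)
Definition W (s t : F) (a b d c : int) (u : F) : F :=
  let w := wpar s t in
  if [&& absz (a - b) == 1%N, absz (b - c) == 1%N,
         absz (c - d) == 1%N & absz (d - a) == 1%N] then
    if a == c then
      if b == d then (- (b - a)%:~R * u + a%:~R + w) / (a%:~R + w)
      else u * (b%:~R + w) / (a%:~R + w)
    else if b == d then u + 1 else 0
  else 0.

End Defs.

From mathcomp Require Import all_boot all_algebra.
From mathcomp Require Import reals complex.
From mathcomp Require Import zify ring.
Set Implicit Arguments. Unset Strict Implicit. Unset Printing Implicit Defensive.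
Import GRing.Theory Num.Theory.
Local Open Scope ring_scope.

(* Since |a - b| = |b - c| = 1, there are four
   configurations (b, c) = (a +- 1, a +- 2) or (a +- 1, a); in each of them at
   most two of the three summands b' = a - 1, a, a + 1 survive, and the
   identity reduces to four rational identities in u, v, alpha, a, w, t
   (after eliminating s = 2 w - t), closed by [ring] or [field] using the
   hypothesis a + w <> 0.  The theorem is the case F = C of this development,
   after a case split on the four configurations. *)

Section Intertwining.
Variables (F : fieldType) (alpha s t : F).

Definition col4 (x0 x1 x2 x3 : F) : 'cV[F]_4 :=
  \col_(i < 4) nth 0 [:: x0; x1; x2; x3] i.

Lemma scale_col4 k x0 x1 x2 x3 :
  k *: col4 x0 x1 x2 x3 = col4 (k * x0) (k * x1) (k * x2) (k * x3).
Proof. by apply/matrixP=> i j; rewrite !mxE; case: i => [[|[|[|[|i]]]] hi]. Qed.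

Lemma add_col4 x0 x1 x2 x3 y0 y1 y2 y3 :
  col4 x0 x1 x2 x3 + col4 y0 y1 y2 y3 =
  col4 (x0 + y0) (x1 + y1) (x2 + y2) (x3 + y3).
Proof. by apply/matrixP=> i j; rewrite !mxE; case: i => [[|[|[|[|i]]]] hi]. Qed.

Lemma tens_vec2 p q : tens (vec2 1 p) (vec2 1 q) = col4 1 q p (p * q).
Proof.
apply/matrixP=> i j; rewrite !mxE.
by case: i => [[|[|[|[|i]]]] hi] //=; rewrite ?mxE ?inordK //= ?mul1r ?mulr1.
Qed.

Lemma Rmat_col4 z x0 x1 x2 x3 :
  Rmat alpha z *m col4 x0 x1 x2 x3 =
  col4 ((z + 1) * x0) (z * x1 + x2) (x1 + z * x2)
       (alpha ^+ 2 * z * (z + 1) * x0 + (z + 1) * x3).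
Proof.
apply/matrixP=> i j; rewrite !mxE !big_ord_recr big_ord0 /=.
by case: i => [[|[|[|[|i]]]] hi] //=; rewrite ?mxE /=; ring.
Qed.

Lemma psi_up x a : psi alpha s t x a (a + 1) = vec2 1 (alpha * (x - a%:~R - t)).
Proof. by rewrite /psi eqxx. Qed.

Lemma psi_down x a : psi alpha s t x a (a - 1) = vec2 1 (alpha * (x + a%:~R + s)).
Proof. by rewrite /psi ifN ?eqxx //; lia. Qed.

Lemma psi_up_to x b :
  psi alpha s t x (b - 1) b = vec2 1 (alpha * (x - (b - 1)%:~R - t)).
Proof. by rewrite -{2}(subrK 1 b) psi_up. Qed.

Lemma psi_down_to x b :
  psi alpha s t x (b + 1) b = vec2 1 (alpha * (x + (b + 1)%:~R + s)).
Proof. by rewrite -{2}(addrK 1 b) psi_down. Qed.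

Lemma W_zero a b d c z :
  ~~ [&& absz (a - b) == 1%N, absz (b - c) == 1%N,
         absz (c - d) == 1%N & absz (d - a) == 1%N] ->
  W s t a b d c z = 0.
Proof. by rewrite /W => /negbTE ->. Qed.

Lemma W_through a b c z :
  absz (a - b) = 1%N -> absz (b - c) = 1%N -> a != c -> W s t a b b c z = z + 1.
Proof.
move=> ab bc /negbTE ac; rewrite /W ac eqxx.
by have -> : [&& absz (a - b) == 1%N, absz (b - c) == 1%N,
               absz (c - b) == 1%N & absz (b - a) == 1%N] by lia.
Qed.

Lemma W_return_same a b z :
  absz (a - b) = 1%N ->
  W s t a b b a z = (- (b - a)%:~R * z + a%:~R + wpar s t) / (a%:~R + wpar s t).
Proof.
move=> ab; rewrite /W /= !eqxx.
by have -> : [&& absz (a - b) == 1%N, absz (b - a) == 1%N,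
               absz (a - b) == 1%N & absz (b - a) == 1%N] by lia.
Qed.

Lemma W_return_cross a b d z :
  absz (a - b) = 1%N -> absz (a - d) = 1%N -> b != d ->
  W s t a b d a z = z * (b%:~R + wpar s t) / (a%:~R + wpar s t).
Proof.
move=> ab ad /negbTE bd; rewrite /W /= eqxx bd.
by have -> : [&& absz (a - b) == 1%N, absz (b - a) == 1%N,
               absz (a - d) == 1%N & absz (d - a) == 1%N] by lia.
Qed.

Definition intertwines (u v : F) (a b c : int) : Prop :=
  Rmat alpha (u - v) *m tens (psi alpha s t u a b) (psi alpha s t v b c)
  = \sum_(b' <- [:: a - 1; a; a + 1])
      W s t a b b' c (u - v) *: tens (psi alpha s t u b' c) (psi alpha s t v a b').

(* Monotone paths: only b' = b contributes, with weight u - v + 1. *)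
Lemma intertwines_up_up u v a : intertwines u v a (a + 1) (a + 1 + 1).
Proof.
rewrite /intertwines !big_cons big_nil W_zero; last by lia.
rewrite W_zero; last by lia.
rewrite W_through; [|lia..].
rewrite !scale0r !add0r addr0 !psi_up !tens_vec2 Rmat_col4 scale_col4.
by congr col4; rewrite ?intrD; ring.
Qed.

Lemma intertwines_down_down u v a : intertwines u v a (a - 1) (a - 1 - 1).
Proof.
rewrite /intertwines !big_cons big_nil W_through; [|lia..].
rewrite W_zero; last by lia.
rewrite W_zero; last by lia.
rewrite !scale0r !addr0 !psi_down !tens_vec2 Rmat_col4 scale_col4.
by congr col4; rewrite ?intrB; ring.
Qed.

Hypothesis two_neq0 : (2 : F) != 0.

Lemma s_wpar : s = 2 * wpar s t - t.
Proof. by rewrite /wpar; field. Qed.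

(* Returning paths: b' = a - 1 and b' = a + 1 both contribute. *)
Lemma intertwines_up_down u v a :
  a%:~R + wpar s t != 0 -> intertwines u v a (a + 1) a.
Proof.
move=> aw; rewrite /intertwines !big_cons big_nil W_return_cross; [|lia..].
rewrite W_zero; last by lia.
rewrite W_return_same; last by lia.
rewrite scale0r add0r addr0 !psi_up !psi_down !psi_up_to !psi_down_to.
rewrite !tens_vec2 Rmat_col4 !scale_col4 add_col4 ?intrB ?intrD.
have := s_wpar; move: aw; move: (wpar s t) => w aw ->.
by congr col4; field.
Qed.

Lemma intertwines_down_up u v a :
  a%:~R + wpar s t != 0 -> intertwines u v a (a - 1) a.
Proof.
move=> aw; rewrite /intertwines !big_cons big_nil W_return_same; last by lia.
rewrite W_zero; last by lia.
rewrite W_return_cross; [|lia..].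
rewrite scale0r add0r addr0 !psi_up !psi_down !psi_up_to !psi_down_to.
rewrite !tens_vec2 Rmat_col4 !scale_col4 add_col4 ?intrB ?intrD.
have := s_wpar; move: aw; move: (wpar s t) => w aw ->.
by congr col4; field.
Qed.

End Intertwining.

Lemma adjacent_int (x y : int) : absz (x - y) = 1%N -> y = x - 1 \/ y = x + 1.
Proof. by move=> h; lia. Qed.

Theorem mainTheorem4 (R : realType) (alpha s t : R[i])
  (hw : forall l : int, l%:~R + wpar s t != 0)
  (u v : R[i]) (a b c : int)
  (hab : absz (a - b) = 1%N) (hbc : absz (b - c) = 1%N) :
  Rmat alpha (u - v) *m tens (psi alpha s t u a b) (psi alpha s t v b c)
  = \sum_(b' <- [:: a - 1; a; a + 1])
      W s t a b b' c (u - v) *: tens (psi alpha s t u b' c) (psi alpha s t v a b').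
Proof.
have two : (2 : R[i]) != 0 by rewrite pnatr_eq0.
move: hbc; case/adjacent_int: hab => -> /adjacent_int [] ->.
- exact: intertwines_down_down.
- by rewrite subrK; exact: intertwines_down_up two u v a (hw a).
- by rewrite addrK; exact: intertwines_up_down two u v a (hw a).
- exact: intertwines_up_up.
Qed.
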